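(* Let $(M,g)$ be a four-dimensional spacetime with signature $(+,-,-,-)$ and let $X_{abcd}$ be an arbitrary $(2,2)$ double form at a point. Decompose $X=\sum_{i=1}^{6}{}^{(i)}X$ as follows: $S_{abcd}=\tfrac12(X_{abcd}+X_{cdab})$, $A_{abcd}=\tfrac12(X_{abcd}-X_{cdab})$; ${}^{(4)}X_{abcd}=\tfrac1{24}\sum_{\pi}\mathrm{sgn}(\pi)X_{\pi(abcd)}$ (total antisymmetrization over the four indices); ${}^{(c)}X=S-{}^{(4)}X$; with $X_{ac}=g^{bd}X_{abcd}$, $X=g^{ac}X_{ac}$, ${}^{(3)}X_{abcd}=\tfrac{X}{12}(g_{ac}g_{bd}-g_{ad}g_{bc})$; with $h_{ab}$ the traceless part $h_{ab}=c_{ab}-\tfrac14 c\,g_{ab}$ of the first trace $c_{ab}=g^{bd}\,{}^{(c)}X_{abcd}$, ${}^{(2)}X_{abcd}=\tfrac12(g_{ac}h_{bd}-g_{ad}h_{bc}+g_{bd}h_{ac}-g_{bc}h_{ad})$; ${}^{(1)}X={}^{(c)}X-{}^{(2)}X-{}^{(3)}X$; with $k_{ac}=g^{bd}A_{abcd}$, ${}^{(6)}X_{abcd}=\tfrac12(g_{ac}k_{bd}-g_{ad}k_{bc}+g_{bd}k_{ac}-g_{bc}k_{ad})$; ${}^{(5)}X=A-{}^{(6)}X$. Then, with $\overleftrightarrow{\star}Y_{abcd}=\tfrac14\varepsilon_{ab}{}^{pq}\varepsilon_{cd}{}^{rs}Y_{pqrs}$, $$\overleftrightarrow{\star}\,{}^{(1)}X=-{}^{(1)}X,\quad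 \overleftrightarrow{\star}\,{}^{(2)}X=+{}^{(2)}X,\quad \overleftrightarrow{\star}\,{}^{(3)}X=-{}^{(3)}X,$$ $$\overleftrightarrow{\star}\,{}^{(4)}X=-{}^{(4)}X,\quad \overleftrightarrow{\star}\,{}^{(5)}X=+{}^{(5)}X,\quad \overleftrightarrow{\star}\,{}^{(6)}X=-{}^{(6)}X.$$
   Context: A $(2,2)$ double form is a covariant 4-tensor with $X_{abcd}=-X_{bacd}=-X_{abdc}$. The Levi-Civita tensors are $\varepsilon_{abcd}=\sqrt{-\det g}\,[abcd]$, $\varepsilon^{abcd}=-[abcd]/\sqrt{-\det g}$ with $[0123]=+1$, so that $\varepsilon^{a_1\dots a_4}\varepsilon_{b_1\dots b_4}=-\delta^{a_1\dots a_4}_{b_1\dots b_4}$ (generalized Kronecker delta). The pieces ${}^{(i)}X$ are the six irreducible components of $X$ under the pseudo-orthogonal group: ${}^{(1)}X$ is symmetric, satisfies the cyclic identity and is traceless; ${}^{(2)}X,{}^{(3)}X$ are Kulkarni–Nomizu products of the metric with the traceless first trace and with a multiple of the metric; ${}^{(4)}X$ is a 4-form; ${}^{(5)}X$ is antisymmetric (under $ab\leftrightarrow cd$) and traceless; ${}^{(6)}X$ is the antisymmetric Kulkarni–Nomizu piece. *)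

From HB Require Import structures.
From mathcomp Require Import all_boot all_order all_algebra all_fingroup.
Set Implicit Arguments. Unset Strict Implicit. Unset Printing Implicit Defensive.
Import Order.TTheory GRing.Theory Num.Theory.
Local Open Scope ring_scope.

(* Components of covariant rank-4 tensors at a point, indices in {0,1,2,3}. *)
Definition tensor4 (R : Type) := 'I_4 -> 'I_4 -> 'I_4 -> 'I_4 -> R.
Definition tensor2 (R : Type) := 'I_4 -> 'I_4 -> R.

Section Defs.
Variable R : rcfType.
Variable g : 'M[R]_4.

Definition double_form (X : tensor4 R) : Prop :=
  (forall a b c d, X a b c d = - X b a c d) /\
  (forall a b c d, X a b c d = - X a b d c).

Definition minkowski_eta : 'M[R]_4 :=
  diag_mx (\row_(i < 4) (if i == ord0 then 1 else -1)).
Definition lorentzian (g : 'M[R]_4) : Prop :=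
  g^T = g /\ exists P : 'M[R]_4, P \in unitmx /\ g = P^T *m minkowski_eta *m P.

Definition ginv : 'M[R]_4 := invmx g.

(* Levi-Civita symbol [abcd] with [0123] = +1 (sign of permutation, 0 if repeated). *)
Definition sgdiff (i j : 'I_4) : R := (sgz ((j : int) - (i : int)))%:~R.
Definition levi (a b c d : 'I_4) : R :=
  sgdiff a b * sgdiff a c * sgdiff a d * sgdiff b c * sgdiff b d * sgdiff c d.

Definition eps_low (a b c d : 'I_4) : R := Num.sqrt (- \det g) * levi a b c d.
Definition eps_mixed (a b p q : 'I_4) : R :=
  \sum_(m < 4) \sum_(n < 4) eps_low a b m n * ginv m p * ginv n q.

Definition dstar (Y : tensor4 R) : tensor4 R := fun a b c d =>
  4^-1 * \sum_(p < 4) \sum_(q < 4) \sum_(r < 4) \sum_(s < 4)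
     eps_mixed a b p q * eps_mixed c d r s * Y p q r s.

Definition tr1 (Y : tensor4 R) : tensor2 R := fun a c =>
  \sum_(b < 4) \sum_(d < 4) ginv b d * Y a b c d.
Definition tr2 (h : tensor2 R) : R := \sum_(a < 4) \sum_(c < 4) ginv a c * h a c.

Definition KN (h : tensor2 R) : tensor4 R := fun a b c d =>
  2^-1 * (g a c * h b d - g a d * h b c + g b d * h a c - g b c * h a d).

Variable X : tensor4 R.

Definition Xsym : tensor4 R := fun a b c d => 2^-1 * (X a b c d + X c d a b).
Definition Xanti : tensor4 R := fun a b c d => 2^-1 * (X a b c d - X c d a b).

Definition X4 : tensor4 R := fun a b c d =>
  let idx := [tuple a; b; c; d] in
  24^-1 * \sum_(s : 'S_4) (-1) ^+ (odd_perm s) *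
     X (tnth idx (s 0)) (tnth idx (s 1)) (tnth idx (s 2)) (tnth idx (s 3)).

Definition Xc : tensor4 R := fun a b c d => Xsym a b c d - X4 a b c d.

Definition X3 : tensor4 R := fun a b c d =>
  tr2 (tr1 X) / 12 * (g a c * g b d - g a d * g b c).

Definition hXc : tensor2 R := fun a b => tr1 Xc a b - tr2 (tr1 Xc) / 4 * g a b.
Definition X2 : tensor4 R := KN hXc.
Definition X1 : tensor4 R := fun a b c d => Xc a b c d - X2 a b c d - X3 a b c d.

Definition X6 : tensor4 R := KN (tr1 Xanti).
Definition X5 : tensor4 R := fun a b c d => Xanti a b c d - X6 a b c d.

End Defs.

From HB Require Import structures.
From mathcomp Require Import all_boot all_order all_algebra all_fingroup.
From mathcomp Require Import ring.
Import Order.TTheory GRing.Theory Num.Theory.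
Local Open Scope ring_scope.

Set Implicit Arguments. Unset Strict Implicit. Unset Printing Implicit Defensive.

(* Writing eps_ab^pq = sqrt(-det g) * det(e_a, e_b, g^{.p}, g^{.q}), the product
   eps_ab^pq eps_cd^rs is minus the Gram determinant (with respect to g) of the frames
   (e_a, e_b, g^{.p}, g^{.q}) and (e_c, e_d, g^{.r}, g^{.s}), whose entries are g, delta and
   g^{-1}.  In its Laplace expansion along the first two rows every term is antisymmetric in
   (p, q) or in (r, s), so against a double form Y it contracts to Y_cdab, to the first trace
   t_ac = g^{bd} Y_abcd or to its trace t:
     (dstar Y)_abcd = - Y_cdab + g_ac t_db - g_ad t_cb + g_bd t_ca - g_bc t_da
                      - t/2 (g_ac g_bd - g_ad g_bc).
   Hence dstar Y = -Y for a traceless Y symmetric under ab <-> cd (pieces 1 and 4) and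
   dstar Y = Y for a traceless antisymmetric one (piece 5), while for a Kulkarni-Nomizu product
   dstar (KN h) = KN h - (tr h)/2 (g_ac g_bd - g_ad g_bc) if h is symmetric and -KN h if h is
   antisymmetric, which gives pieces 2 (tr h = 0), 3 (h proportional to g) and 6. *)

(** * Kronecker delta and determinants of order 4 *)

Definition kdelta {R : nzRingType} {n} (i j : 'I_n) : R := (i == j)%:R.

Lemma kdeltaC {R : nzRingType} {n} (i j : 'I_n) : kdelta i j = kdelta j i :> R.
Proof. by rewrite /kdelta eq_sym. Qed.

Lemma kdelta_xx {R : nzRingType} {n} (i : 'I_n) : kdelta i i = 1 :> R.
Proof. by rewrite /kdelta eqxx. Qed.

Lemma kdelta_neq {R : nzRingType} {n} (i j : 'I_n) : i != j -> kdelta i j = 0 :> R.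
Proof. by move/negbTE; rewrite /kdelta => ->. Qed.

Lemma sum_kdelta (R : nzRingType) n (F : 'I_n -> R) x :
  (forall i, i != x -> F i = 0) -> \sum_i F i = F x.
Proof. by move=> F0; rewrite (bigD1 x) //= big1 ?addr0 // => i /F0. Qed.
Arguments sum_kdelta {R n F} x.

Ltac kdelta_off :=
  let i := fresh "i" in let ne := fresh "ne" in
  move=> i ne; rewrite (kdelta_neq ne); do ?[apply: big1 => ? _]; ring.

Definition o0 : 'I_4 := @Ordinal 4 0 isT.
Definition o1 : 'I_4 := @Ordinal 4 1 isT.
Definition o2 : 'I_4 := @Ordinal 4 2 isT.
Definition o3 : 'I_4 := @Ordinal 4 3 isT.

Lemma sum4E (V : nmodType) (F : 'I_4 -> V) :
  \sum_(i < 4) F i = F o0 + F o1 + F o2 + F o3.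
Proof.
by rewrite !big_ord_recr big_ord0 /= add0r; congr (F _ + F _ + F _ + F _); apply: val_inj.
Qed.

Lemma ord4_ind (P : 'I_4 -> Prop) : P o0 -> P o1 -> P o2 -> P o3 -> forall i, P i.
Proof.
move=> P0 P1 P2 P3 [[|[|[|[|//]]]] lt_i4].
- by have -> : Ordinal lt_i4 = o0 by apply: val_inj.
- by have -> : Ordinal lt_i4 = o1 by apply: val_inj.
- by have -> : Ordinal lt_i4 = o2 by apply: val_inj.
- by have -> : Ordinal lt_i4 = o3 by apply: val_inj.
Qed.

Section Leibniz.
Variable R : rcfType.

Lemma sgdiffE (i j : 'I_4) :
  sgdiff R i j = if (i < j)%N then 1 else if (i == j :> nat) then 0 else -1.
Proof.
rewrite /sgdiff; case: ltngtP => ij.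
- by rewrite gtr0_sgz // subr_gt0 ltz_nat.
- by rewrite ltr0_sgz // subr_lt0 ltz_nat.
- by rewrite ij subrr.
Qed.

(* Stated for a function of natural numbers so that the cofactor expansion computes on
   closed indices. *)
Lemma det_levi4_nat (m : nat -> nat -> R) : \det (\matrix_(i < 4, j < 4) m i j) =
  \sum_(i < 4) \sum_(j < 4) \sum_(k < 4) \sum_(l < 4)
    levi R i j k l * m i 0%N * m j 1%N * m k 2%N * m l 3%N.
Proof.
have expand n (M : 'M[R]_n.+1) :
    \det M = \sum_i M i 0 * ((-1) ^+ i * \det (row' i (col' 0 M))).
  by rewrite (expand_det_col _ 0); apply: eq_bigr => i _; rewrite /cofactor addn0.
have sum3E (F : 'I_3 -> R) :
    \sum_(i < 3) F i = F (@Ordinal 3 0 isT) + F (@Ordinal 3 1 isT) + F (@Ordinal 3 2 isT).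
  by rewrite !big_ord_recr big_ord0 /= add0r; congr (F _ + F _ + F _); apply: val_inj.
have sum2E (F : 'I_2 -> R) : \sum_(i < 2) F i = F (@Ordinal 2 0 isT) + F (@Ordinal 2 1 isT).
  by rewrite !big_ord_recr big_ord0 /= add0r; congr (F _ + F _); apply: val_inj.
rewrite expand sum4E !expand !sum3E !expand !sum2E !det_mx11 !mxE /= /bump /=.
rewrite !sum4E /levi !sgdiffE /=.
ring.
Qed.

Lemma det_levi4 (f : 'I_4 -> 'I_4 -> R) : \det (\matrix_(i, j) f i j) =
  \sum_i \sum_j \sum_k \sum_l levi R i j k l * f i o0 * f j o1 * f k o2 * f l o3.
Proof.
have [e0 e1 e2 e3] : [/\ inord 0 = o0, inord 1 = o1, inord 2 = o2 & inord 3 = o3].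
  by split; apply: val_inj; rewrite /= inordK.
have -> : \matrix_(i, j) f i j = \matrix_(i, j) (fun m n : nat => f (inord m) (inord n)) i j.
  by apply/matrixP => i j; rewrite !mxE !inord_val.
rewrite (det_levi4_nat (fun m n => f (inord m) (inord n))) e0 e1 e2 e3.
by do 4!(apply: eq_bigr => ? _); rewrite !inord_val.
Qed.

Lemma det4_laplace (f : 'I_4 -> 'I_4 -> R) : \det (\matrix_(i, j) f i j) =
    (f o0 o0 * f o1 o1 - f o0 o1 * f o1 o0) * (f o2 o2 * f o3 o3 - f o2 o3 * f o3 o2)
  - (f o0 o0 * f o1 o2 - f o0 o2 * f o1 o0) * (f o2 o1 * f o3 o3 - f o2 o3 * f o3 o1)
  + (f o0 o0 * f o1 o3 - f o0 o3 * f o1 o0) * (f o2 o1 * f o3 o2 - f o2 o2 * f o3 o1)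
  + (f o0 o1 * f o1 o2 - f o0 o2 * f o1 o1) * (f o2 o0 * f o3 o3 - f o2 o3 * f o3 o0)
  - (f o0 o1 * f o1 o3 - f o0 o3 * f o1 o1) * (f o2 o0 * f o3 o2 - f o2 o2 * f o3 o0)
  + (f o0 o2 * f o1 o3 - f o0 o3 * f o1 o2) * (f o2 o0 * f o3 o1 - f o2 o1 * f o3 o0).
Proof. by rewrite det_levi4 !sum4E /levi !sgdiffE /=; ring. Qed.

End Leibniz.

(** * Contractions against a double form *)

Lemma double_formB (R : rcfType) (Y Z : tensor4 R) : double_form Y -> double_form Z ->
  double_form (fun a b c d => Y a b c d - Z a b c d).
Proof.
move=> [YA12 YA34] [ZA12 ZA34]; split=> a b c d.
- by rewrite (YA12 a) (ZA12 a); ring.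
- by rewrite (YA34 a b c) (ZA34 a b c); ring.
Qed.

Section Contraction.
Variable R : rcfType.
Implicit Types F Y : tensor4 R.

Definition contract4 F Y : R :=
  \sum_p \sum_q \sum_r \sum_s F p q r s * Y p q r s.

Lemma eq_contract4 F1 F2 Y :
  (forall p q r s, F1 p q r s = F2 p q r s) -> contract4 F1 Y = contract4 F2 Y.
Proof. by move=> eF; do 4!(apply: eq_bigr => ? _); rewrite eF. Qed.

Lemma contract4_oppr F Y1 Y2 :
  (forall p q r s, Y2 p q r s = - Y1 p q r s) -> contract4 F Y2 = - contract4 F Y1.
Proof.
move=> eY; rewrite /contract4 -sumrN; apply: eq_bigr => p _; rewrite -sumrN.
apply: eq_bigr => q _; rewrite -sumrN; apply: eq_bigr => r _; rewrite -sumrN.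
by apply: eq_bigr => s _; rewrite eY mulrN.
Qed.

Lemma contract4D F1 F2 Y :
  contract4 (fun p q r s => F1 p q r s + F2 p q r s) Y = contract4 F1 Y + contract4 F2 Y.
Proof.
rewrite /contract4 -big_split; apply: eq_bigr => p _; rewrite -big_split.
apply: eq_bigr => q _; rewrite -big_split; apply: eq_bigr => r _; rewrite -big_split.
by apply: eq_bigr => s _; rewrite mulrDl.
Qed.

Lemma contract4N F Y : contract4 (fun p q r s => - F p q r s) Y = - contract4 F Y.
Proof.
rewrite /contract4 -sumrN; apply: eq_bigr => p _; rewrite -sumrN.
apply: eq_bigr => q _; rewrite -sumrN; apply: eq_bigr => r _; rewrite -sumrN.
by apply: eq_bigr => s _; rewrite mulNr.
Qed.

Lemma contract4Z k F Y : contract4 (fun p q r s => k * F p q r s) Y = k * contract4 F Y.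
Proof.
rewrite /contract4 mulr_sumr; apply: eq_bigr => p _; rewrite mulr_sumr.
apply: eq_bigr => q _; rewrite mulr_sumr; apply: eq_bigr => r _; rewrite mulr_sumr.
by apply: eq_bigr => s _; rewrite mulrA.
Qed.

Lemma contract4_swap12 F Y :
  contract4 (fun p q r s => F q p r s) Y = contract4 F (fun p q r s => Y q p r s).
Proof. exact: exchange_big. Qed.

Lemma contract4_swap34 F Y :
  contract4 (fun p q r s => F p q s r) Y = contract4 F (fun p q r s => Y p q s r).
Proof. by apply: eq_bigr => p _; apply: eq_bigr => q _; apply: exchange_big. Qed.

Lemma contract4_alt12 F Y : double_form Y ->
  contract4 (fun p q r s => F p q r s - F q p r s) Y = 2 * contract4 F Y.
Proof.
move=> [Y_A12 _]; rewrite contract4D contract4N (contract4_swap12 F).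
by rewrite (contract4_oppr F (fun p q r s => Y_A12 q p r s)) opprK mulr_natl mulr2n.
Qed.

Lemma contract4_alt34 F Y : double_form Y ->
  contract4 (fun p q r s => F p q r s - F p q s r) Y = 2 * contract4 F Y.
Proof.
move=> [_ Y_A34]; rewrite contract4D contract4N (contract4_swap34 F).
by rewrite (contract4_oppr F (fun p q r s => Y_A34 p q s r)) opprK mulr_natl mulr2n.
Qed.

Variable g : 'M[R]_4.
Local Notation G := (ginv g).

Lemma tr1_swap34 Y : double_form Y ->
  forall a c, tr1 g (fun p q r s => Y p q s r) a c = - tr1 g Y a c.
Proof.
move=> [_ Y_A34] a c; rewrite /tr1 -sumrN; apply: eq_bigr => b _; rewrite -sumrN.
by apply: eq_bigr => d _; rewrite Y_A34 mulrN.
Qed.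

Lemma contract4_ginv2 Y :
  contract4 (fun p q r s => G p r * G q s) Y = tr2 g (tr1 g Y).
Proof.
apply: eq_bigr => p _; rewrite exchange_big; apply: eq_bigr => r _.
rewrite mulr_sumr; apply: eq_bigr => q _; rewrite mulr_sumr; apply: eq_bigr => s _.
by rewrite mulrA.
Qed.

Lemma contract4_kdelta4 Y a b c d :
  contract4 (fun p q r s => kdelta p c * kdelta q d * kdelta r a * kdelta s b) Y = Y c d a b.
Proof.
rewrite /contract4 (sum_kdelta c); last by kdelta_off.
rewrite (sum_kdelta d); last by kdelta_off.
rewrite (sum_kdelta a); last by kdelta_off.
rewrite (sum_kdelta b); last by kdelta_off.
by rewrite !kdelta_xx !mul1r.
Qed.

Lemma contract4_kdelta2_ginv Y x y :
  contract4 (fun p q r s => kdelta p y * kdelta r x * G q s) Y = tr1 g Y y x.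
Proof.
rewrite /contract4 (sum_kdelta y); last by kdelta_off.
rewrite exchange_big (sum_kdelta x); last by kdelta_off.
by apply: eq_bigr => q _; apply: eq_bigr => s _; rewrite !kdelta_xx !mul1r.
Qed.

Lemma contract4_kdelta2_ginv_swap Y x y : double_form Y ->
  contract4 (fun p q r s => kdelta p y * kdelta s x * G q r) Y = - tr1 g Y y x.
Proof.
move=> Ydf; rewrite (contract4_swap34 (fun p q r s => kdelta p y * kdelta r x * G q s)).
by rewrite contract4_kdelta2_ginv tr1_swap34.
Qed.

Lemma contract4_ginv_block Y k : double_form Y ->
  contract4 (fun p q r s => k * (G p r * G q s - G p s * G q r)) Y =
  2 * k * tr2 g (tr1 g Y).
Proof.
move=> Ydf; pose F p q r s : R := k * (G p r * G q s).
rewrite (@eq_contract4 _ (fun p q r s => F p q r s - F q p r s));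
  last by move=> p q r s; rewrite /F; ring.
by rewrite contract4_alt12 // /F contract4Z contract4_ginv2 mulrA.
Qed.

Lemma contract4_kdelta_block Y a b c d : double_form Y ->
  contract4 (fun p q r s => (kdelta r a * kdelta s b - kdelta s a * kdelta r b)
                          * (kdelta p c * kdelta q d - kdelta p d * kdelta q c)) Y
  = 4 * Y c d a b.
Proof.
move=> Ydf; pose F p q r s : R := kdelta p c * kdelta q d * kdelta r a * kdelta s b.
pose H p q r s : R := F p q r s - F q p r s.
rewrite (@eq_contract4 _ (fun p q r s => H p q r s - H p q s r));
  last by move=> p q r s; rewrite /H /F; ring.
rewrite contract4_alt34 // /H contract4_alt12 // /F contract4_kdelta4; ring.
Qed.

Lemma contract4_mixed_block Y u v a b y : double_form Y ->
  contract4 (fun p q r s => (u * kdelta r b - kdelta r a * v)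
                          * (kdelta p y * G q s - G p s * kdelta q y)) Y
  = 2 * (u * tr1 g Y y b - v * tr1 g Y y a).
Proof.
move=> Ydf; pose F p q r s : R := (u * kdelta r b - kdelta r a * v) * (kdelta p y * G q s).
rewrite (@eq_contract4 _ (fun p q r s => F p q r s - F q p r s));
  last by move=> p q r s; rewrite /F; ring.
rewrite contract4_alt12 // (@eq_contract4 F (fun p q r s =>
  u * (kdelta p y * kdelta r b * G q s) - v * (kdelta p y * kdelta r a * G q s)));
  last by move=> p q r s; rewrite /F; ring.
by rewrite contract4D contract4N !contract4Z !contract4_kdelta2_ginv.
Qed.

Lemma contract4_mixed_block_swap Y u v a b y : double_form Y ->
  contract4 (fun p q r s => (u * kdelta s b - kdelta s a * v)
                          * (kdelta p y * G q r - G p r * kdelta q y)) Y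
  = - 2 * (u * tr1 g Y y b - v * tr1 g Y y a).
Proof.
move=> Ydf; pose F p q r s : R := (u * kdelta s b - kdelta s a * v) * (kdelta p y * G q r).
rewrite (@eq_contract4 _ (fun p q r s => F p q r s - F q p r s));
  last by move=> p q r s; rewrite /F; ring.
rewrite contract4_alt12 // (@eq_contract4 F (fun p q r s =>
  u * (kdelta p y * kdelta s b * G q r) - v * (kdelta p y * kdelta s a * G q r)));
  last by move=> p q r s; rewrite /F; ring.
rewrite contract4D contract4N !contract4Z !contract4_kdelta2_ginv_swap //; ring.
Qed.

End Contraction.

(** * The totally antisymmetric part *)

Ltac tuple_tperm := apply: ord4_ind => /=; by rewrite ?tpermL ?tpermR ?tpermD.

Section Antisymmetrization.
Variable R : rcfType.
Variable X : tensor4 R.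

Definition alt4 (f : 'I_4 -> 'I_4) : R :=
  24^-1 * \sum_(s : 'S_4) (-1) ^+ s * X (f (s 0)) (f (s 1)) (f (s 2)) (f (s 3)).

Lemma X4E a b c d : X4 X a b c d = alt4 (tnth [tuple a; b; c; d]).
Proof. by []. Qed.

Lemma eq_alt4 f1 f2 : f1 =1 f2 -> alt4 f1 = alt4 f2.
Proof. by move=> ef; congr (_ * _); apply: eq_bigr => s _; rewrite !ef. Qed.

Lemma alt4_perm f (t : 'S_4) : alt4 (f \o t) = (-1) ^+ t * alt4 f.
Proof.
rewrite /alt4 (reindex_inj (mulIg t^-1%g)) /= mulrCA; congr (_ * _).
rewrite mulr_sumr; apply: eq_bigr => s _.
have st i : t ((s * t^-1)%g i) = s i by rewrite -permM mulgKV.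
by rewrite !st odd_permM odd_permV signr_addb -mulrA mulrCA.
Qed.

Lemma alt4_tperm f1 f2 (i j : 'I_4) :
  i != j -> f1 =1 f2 \o tperm i j -> alt4 f1 = - alt4 f2.
Proof. by move=> ij ef; rewrite (eq_alt4 ef) alt4_perm odd_tperm ij expr1 mulN1r. Qed.

Lemma double_form_X4 : double_form (X4 X).
Proof.
split=> a b c d; rewrite !X4E.
- by apply: (@alt4_tperm _ _ o0 o1) => //; tuple_tperm.
- by apply: (@alt4_tperm _ _ o2 o3) => //; tuple_tperm.
Qed.

Lemma X4_swap02 a b c d : X4 X c b a d = - X4 X a b c d.
Proof. by rewrite !X4E; apply: (@alt4_tperm _ _ o0 o2) => //; tuple_tperm. Qed.

Lemma X4_swap13 a b c d : X4 X a d c b = - X4 X a b c d.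
Proof. by rewrite !X4E; apply: (@alt4_tperm _ _ o1 o3) => //; tuple_tperm. Qed.

Lemma X4_pairC a b c d : X4 X c d a b = X4 X a b c d.
Proof. by rewrite X4_swap02 X4_swap13 opprK. Qed.

End Antisymmetrization.

(** * The double dual *)

Section Metric.
Variable R : rcfType.
Variable g : 'M[R]_4.
Hypothesis g_sym : g^T = g.
Hypothesis g_unit : g \in unitmx.
Hypothesis det_g_le0 : \det g <= 0.
Local Notation G := (ginv g).

Lemma gC i j : g i j = g j i.
Proof. by rewrite -{1}g_sym mxE. Qed.

Lemma ginvC i j : G i j = G j i.
Proof. by rewrite /ginv -[in LHS]g_sym -trmx_inv mxE. Qed.

Lemma mul_g_ginv i j : \sum_k g i k * G k j = kdelta i j.
Proof. by move/matrixP: (mulmxV g_unit) => /(_ i j); rewrite !mxE. Qed.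

Lemma mul_ginv_g i j : \sum_k G i k * g k j = kdelta i j.
Proof. by move/matrixP: (mulVmx g_unit) => /(_ i j); rewrite !mxE. Qed.

Definition frame (a b p q i j : 'I_4) : R :=
  nth 0 [:: kdelta i a; kdelta i b; G i p; G i q] j.

Lemma eps_mixed_det a b p q :
  eps_mixed g a b p q = Num.sqrt (- \det g) * \det (\matrix_(i, j) frame a b p q i j).
Proof.
rewrite det_levi4 /frame /=.
rewrite (sum_kdelta a); last by kdelta_off.
rewrite (sum_kdelta b); last by kdelta_off.
rewrite /eps_mixed mulr_sumr; apply: eq_bigr => m _.
rewrite mulr_sumr; apply: eq_bigr => n _.
by rewrite /eps_low !kdelta_xx; ring.
Qed.

Lemma gram_kdelta_kdelta a c : \sum_x \sum_y kdelta x a * g x y * kdelta y c = g a c.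
Proof.
rewrite (sum_kdelta a); last by kdelta_off.
rewrite (sum_kdelta c); last by move=> y /kdelta_neq ->; ring.
by rewrite !kdelta_xx; ring.
Qed.

Lemma gram_kdelta_ginv a r : \sum_x \sum_y kdelta x a * g x y * G y r = kdelta r a.
Proof.
rewrite (sum_kdelta a); last by kdelta_off.
by rewrite kdelta_xx (kdeltaC r) -mul_g_ginv; apply: eq_bigr => y _; rewrite mul1r.
Qed.

Lemma gram_ginv_kdelta p c : \sum_x \sum_y G x p * g x y * kdelta y c = kdelta p c.
Proof.
rewrite exchange_big (sum_kdelta c); last by kdelta_off.
by rewrite kdelta_xx -mul_ginv_g; apply: eq_bigr => x _; rewrite mulr1 ginvC.
Qed.

Lemma gram_ginv_ginv p r : \sum_x \sum_y G x p * g x y * G y r = G p r.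
Proof.
rewrite exchange_big /=.
transitivity (\sum_y kdelta p y * G y r).
  apply: eq_bigr => y _; rewrite -mul_ginv_g mulr_suml.
  by apply: eq_bigr => x _; rewrite ginvC.
rewrite (sum_kdelta p); last by move=> y ne; rewrite kdeltaC (kdelta_neq ne) mul0r.
by rewrite kdelta_xx mul1r.
Qed.

Lemma sqrt_detN_sqr : Num.sqrt (- \det g) ^+ 2 = - \det g.
Proof. by rewrite sqr_sqrtr // oppr_ge0. Qed.

Lemma eps_mixed_mul a b p q c d r s :
  eps_mixed g a b p q * eps_mixed g c d r s =
  - ((g a c * g b d - g a d * g b c) * (G p r * G q s - G p s * G q r)
     - (g a c * kdelta r b - kdelta r a * g b c) * (kdelta p d * G q s - G p s * kdelta q d)
     + (g a c * kdelta s b - kdelta s a * g b c) * (kdelta p d * G q r - G p r * kdelta q d)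
     + (g a d * kdelta r b - kdelta r a * g b d) * (kdelta p c * G q s - G p s * kdelta q c)
     - (g a d * kdelta s b - kdelta s a * g b d) * (kdelta p c * G q r - G p r * kdelta q c)
     + (kdelta r a * kdelta s b - kdelta s a * kdelta r b)
       * (kdelta p c * kdelta q d - kdelta p d * kdelta q c)).
Proof.
set F1 := \matrix_(i, j) frame a b p q i j; set F2 := \matrix_(i, j) frame c d r s i j.
have -> : eps_mixed g a b p q * eps_mixed g c d r s = - \det (F1^T *m g *m F2).
  rewrite !eps_mixed_det !det_mulmx det_tr.
  have := sqrt_detN_sqr; set sq := Num.sqrt _ => sq2.
  have -> : \det g = - sq ^+ 2 by rewrite sq2 opprK.
  ring.
have -> : F1^T *m g *m F2 =
    \matrix_(i, j) \sum_x \sum_y frame a b p q x i * g x y * frame c d r s y j.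
  apply/matrixP => i j; rewrite !mxE exchange_big; apply: eq_bigr => y _.
  by rewrite !mxE mulr_suml; apply: eq_bigr => x _; rewrite !mxE.
by rewrite det4_laplace /frame /= !gram_kdelta_kdelta !gram_kdelta_ginv !gram_ginv_kdelta
  !gram_ginv_ginv.
Qed.

Lemma dstarE Y : double_form Y -> forall a b c d,
  dstar g Y a b c d = - Y c d a b
    + (g a c * tr1 g Y d b - g a d * tr1 g Y c b + g b d * tr1 g Y c a - g b c * tr1 g Y d a)
    - tr2 g (tr1 g Y) / 2 * (g a c * g b d - g a d * g b c).
Proof.
move=> Ydf a b c d.
have -> : dstar g Y a b c d =
    4^-1 * contract4 (fun p q r s => eps_mixed g a b p q * eps_mixed g c d r s) Y by [].
rewrite (eq_contract4 _ (fun p q r s => eps_mixed_mul a b p q c d r s)).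
rewrite contract4N !contract4D !contract4N contract4_ginv_block // !contract4_mixed_block //.
rewrite !contract4_mixed_block_swap // contract4_kdelta_block //.
by field.
Qed.

Implicit Types (Y Z : tensor4 R) (h k : tensor2 R).

Lemma eq_tr1 Y Z : (forall a b c d, Y a b c d = Z a b c d) ->
  forall a c, tr1 g Y a c = tr1 g Z a c.
Proof. by move=> eYZ a c; apply: eq_bigr => b _; apply: eq_bigr => d _; rewrite eYZ. Qed.

Lemma tr1D Y Z a c :
  tr1 g (fun a b c d => Y a b c d + Z a b c d) a c = tr1 g Y a c + tr1 g Z a c.
Proof.
rewrite /tr1 -big_split; apply: eq_bigr => b _; rewrite -big_split.
by apply: eq_bigr => d _; rewrite mulrDr.
Qed.

Lemma tr1N Y a c : tr1 g (fun a b c d => - Y a b c d) a c = - tr1 g Y a c.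
Proof.
rewrite /tr1 -sumrN; apply: eq_bigr => b _; rewrite -sumrN.
by apply: eq_bigr => d _; rewrite mulrN.
Qed.

Lemma tr1Z x Y a c : tr1 g (fun a b c d => x * Y a b c d) a c = x * tr1 g Y a c.
Proof.
rewrite /tr1 mulr_sumr; apply: eq_bigr => b _; rewrite mulr_sumr.
by apply: eq_bigr => d _; rewrite mulrCA.
Qed.

Lemma tr1_pairC Y a c : tr1 g (fun a b c d => Y c d a b) a c = tr1 g Y c a.
Proof.
by rewrite /tr1 exchange_big; apply: eq_bigr => d _; apply: eq_bigr => b _; rewrite ginvC.
Qed.

Lemma eq_tr2 h k : (forall a c, h a c = k a c) -> tr2 g h = tr2 g k.
Proof. by move=> ehk; apply: eq_bigr => a _; apply: eq_bigr => c _; rewrite ehk. Qed.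

Lemma tr2D h k : tr2 g (fun a c => h a c + k a c) = tr2 g h + tr2 g k.
Proof.
rewrite /tr2 -big_split; apply: eq_bigr => a _; rewrite -big_split.
by apply: eq_bigr => c _; rewrite mulrDr.
Qed.

Lemma tr2N h : tr2 g (fun a c => - h a c) = - tr2 g h.
Proof.
rewrite /tr2 -sumrN; apply: eq_bigr => a _; rewrite -sumrN.
by apply: eq_bigr => c _; rewrite mulrN.
Qed.

Lemma tr2Z x h : tr2 g (fun a c => x * h a c) = x * tr2 g h.
Proof.
rewrite /tr2 mulr_sumr; apply: eq_bigr => a _; rewrite mulr_sumr.
by apply: eq_bigr => c _; rewrite mulrCA.
Qed.

Lemma tr2_trC h : tr2 g (fun a c => h c a) = tr2 g h.
Proof.
by rewrite /tr2 exchange_big; apply: eq_bigr => c _; apply: eq_bigr => a _; rewrite ginvC.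
Qed.

Lemma tr2_eq0 h : (forall a c, h a c = 0) -> tr2 g h = 0.
Proof. by move=> h0; rewrite /tr2 big1 // => a _; rewrite big1 // => c _; rewrite h0 mulr0. Qed.

Lemma tr2_antisym h : (forall a c, h a c = - h c a) -> tr2 g h = 0.
Proof.
move=> hA; have : tr2 g h = - tr2 g h.
  by rewrite -tr2N -[LHS]tr2_trC; apply: eq_tr2 => a c; apply: hA.
by move=> e; apply/eqP; rewrite -eqNr {2}e.
Qed.

Lemma tr2_metric : tr2 g (fun a c => g a c) = 4.
Proof.
transitivity (\sum_(a < 4) (kdelta a a : R)).
  by apply: eq_bigr => a _; rewrite -mul_ginv_g; apply: eq_bigr => c _; rewrite gC.
by rewrite sum4E !kdelta_xx; ring.
Qed.

Lemma sum_ginv_metric (v : 'I_4 -> R) a : \sum_b \sum_d G b d * g a d * v b = v a.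
Proof.
transitivity (\sum_b kdelta a b * v b).
  apply: eq_bigr => b _; rewrite -mul_g_ginv mulr_suml.
  by apply: eq_bigr => d _; rewrite ginvC; ring.
rewrite (sum_kdelta a); last by move=> b ne; rewrite kdeltaC (kdelta_neq ne) mul0r.
by rewrite kdelta_xx mul1r.
Qed.

Lemma tr1_KN h a c : tr1 g (KN g h) a c = h a c + tr2 g h / 2 * g a c.
Proof.
have gac_hbd : tr1 g (fun a b c d => g a c * h b d) a c = g a c * tr2 g h.
  rewrite /tr1 /tr2 mulr_sumr; apply: eq_bigr => b _; rewrite mulr_sumr.
  by apply: eq_bigr => d _; rewrite mulrCA.
have gad_hbc : tr1 g (fun a b c d => g a d * h b c) a c = h a c.
  rewrite -[RHS](sum_ginv_metric (fun b => h b c) a).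
  by apply: eq_bigr => b _; apply: eq_bigr => d _; rewrite mulrA.
have gbd_hac : tr1 g (fun a b c d => g b d * h a c) a c = 4 * h a c.
  rewrite -tr2_metric /tr2 mulr_suml; apply: eq_bigr => b _; rewrite mulr_suml.
  by apply: eq_bigr => d _; rewrite mulrA.
have gbc_had : tr1 g (fun a b c d => g b c * h a d) a c = h a c.
  rewrite -[RHS](sum_ginv_metric (fun d => h a d) c) /tr1 exchange_big.
  by apply: eq_bigr => d _; apply: eq_bigr => b _; rewrite (ginvC b d) (gC b c); ring.
rewrite /KN tr1Z !tr1D !tr1N gac_hbd gad_hbc gbd_hac gbc_had.
by field.
Qed.

Lemma double_form_KN h : double_form (KN g h).
Proof. by split=> a b c d; rewrite /KN; ring. Qed.

Lemma KN_pairC h : (forall a b, h a b = h b a) ->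
  forall a b c d, KN g h c d a b = KN g h a b c d.
Proof. by move=> hS a b c d; rewrite /KN !(gC c) !(gC d) !(hS c) !(hS d); ring. Qed.

Lemma KN_pairN h : (forall a b, h a b = - h b a) ->
  forall a b c d, KN g h c d a b = - KN g h a b c d.
Proof. by move=> hA a b c d; rewrite /KN !(gC c) !(gC d) !(hA c) !(hA d); ring. Qed.

Lemma eq_dstar Y Z : (forall a b c d, Y a b c d = Z a b c d) ->
  forall a b c d, dstar g Y a b c d = dstar g Z a b c d.
Proof. by move=> eYZ a b c d; congr (_ * _); do 4!(apply: eq_bigr => ? _); rewrite eYZ. Qed.

Lemma dstar_pairC_traceless Y : double_form Y ->
  (forall a b c d, Y c d a b = Y a b c d) -> (forall a c, tr1 g Y a c = 0) ->
  forall a b c d, dstar g Y a b c d = - Y a b c d.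
Proof. by move=> Ydf YC Y0 a b c d; rewrite dstarE // !Y0 (tr2_eq0 Y0) YC; ring. Qed.

Lemma dstar_pairN_traceless Y : double_form Y ->
  (forall a b c d, Y c d a b = - Y a b c d) -> (forall a c, tr1 g Y a c = 0) ->
  forall a b c d, dstar g Y a b c d = Y a b c d.
Proof. by move=> Ydf YN Y0 a b c d; rewrite dstarE // !Y0 (tr2_eq0 Y0) YN; ring. Qed.

Lemma dstar_KN_sym h : (forall a b, h a b = h b a) -> forall a b c d,
  dstar g (KN g h) a b c d = KN g h a b c d - tr2 g h / 2 * (g a c * g b d - g a d * g b c).
Proof.
move=> hS a b c d; rewrite (dstarE (double_form_KN h)) !tr1_KN (KN_pairC hS).
rewrite (eq_tr2 (tr1_KN h)) tr2D tr2Z tr2_metric /KN.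
rewrite (hS d b) (hS c b) (hS c a) (hS d a) (gC d b) (gC c b) (gC c a) (gC d a).
by field.
Qed.

Lemma dstar_KN_antisym h : (forall a b, h a b = - h b a) -> forall a b c d,
  dstar g (KN g h) a b c d = - KN g h a b c d.
Proof.
move=> hA a b c d; rewrite (dstarE (double_form_KN h)) !tr1_KN (KN_pairN hA).
rewrite (eq_tr2 (tr1_KN h)) tr2D tr2Z !(tr2_antisym hA) /KN.
rewrite (hA d b) (hA c b) (hA c a) (hA d a).
by field.
Qed.

(** * The six irreducible pieces *)

Section Pieces.
Variable X : tensor4 R.
Hypothesis X_df : double_form X.
Local Notation t := (tr1 g X).
Local Notation T := (tr2 g (tr1 g X)).

Lemma tr1_X4 a c : tr1 g (X4 X) a c = 0.
Proof.
have : tr1 g (X4 X) a c = - tr1 g (X4 X) a c.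
  rewrite {1}/tr1 exchange_big -tr1N; apply: eq_bigr => d _; apply: eq_bigr => b _.
  by rewrite X4_swap13 ginvC.
by move=> e; apply/eqP; rewrite -eqNr {2}e.
Qed.

Lemma double_form_Xsym : double_form (Xsym X).
Proof.
case: X_df => XA12 XA34; split=> a b c d; rewrite /Xsym.
- by rewrite (XA12 a) (XA34 c d a); ring.
- by rewrite (XA34 a b c) (XA12 c d); ring.
Qed.

Lemma double_form_Xanti : double_form (Xanti X).
Proof.
case: X_df => XA12 XA34; split=> a b c d; rewrite /Xanti.
- by rewrite (XA12 a) (XA34 c d a); ring.
- by rewrite (XA34 a b c) (XA12 c d); ring.
Qed.

Lemma Xsym_pairC a b c d : Xsym X c d a b = Xsym X a b c d.
Proof. by rewrite /Xsym addrC. Qed.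

Lemma Xanti_pairN a b c d : Xanti X c d a b = - Xanti X a b c d.
Proof. by rewrite /Xanti -mulrN opprB. Qed.

Lemma tr1_Xsym a c : tr1 g (Xsym X) a c = 2^-1 * (t a c + t c a).
Proof. by rewrite /Xsym tr1Z tr1D (tr1_pairC X). Qed.

Lemma tr1_Xc a c : tr1 g (Xc X) a c = 2^-1 * (t a c + t c a).
Proof. by rewrite /Xc tr1D tr1N tr1_X4 subr0 tr1_Xsym. Qed.

Lemma tr1_Xanti a c : tr1 g (Xanti X) a c = 2^-1 * (t a c - t c a).
Proof. by rewrite /Xanti tr1Z tr1D tr1N (tr1_pairC X). Qed.

Lemma tr2_tr1_Xc : tr2 g (tr1 g (Xc X)) = T.
Proof. by rewrite (eq_tr2 tr1_Xc) tr2Z tr2D tr2_trC; field. Qed.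

Lemma hXcE a b : hXc g X a b = 2^-1 * (t a b + t b a) - T / 4 * g a b.
Proof. by rewrite /hXc tr1_Xc tr2_tr1_Xc. Qed.

Lemma hXc_sym a b : hXc g X a b = hXc g X b a.
Proof. by rewrite !hXcE (gC a b) (addrC (t a b)). Qed.

Lemma tr2_hXc : tr2 g (hXc g X) = 0.
Proof. by rewrite /hXc tr2D tr2N tr2Z tr2_metric; field. Qed.

Lemma tr1_X2 a c : tr1 g (X2 g X) a c = hXc g X a c.
Proof. by rewrite /X2 tr1_KN tr2_hXc mul0r mul0r addr0. Qed.

Lemma X3E a b c d : X3 g X a b c d = KN g (fun a b => T / 12 * g a b) a b c d.
Proof. by rewrite /X3 /KN; field. Qed.

Lemma tr1_X3 a c : tr1 g (X3 g X) a c = T / 4 * g a c.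
Proof.
rewrite (eq_tr1 X3E) tr1_KN tr2Z tr2_metric.
by field.
Qed.

Lemma double_form_X3 : double_form (X3 g X).
Proof. by split=> a b c d; rewrite /X3; ring. Qed.

Lemma X3_pairC a b c d : X3 g X c d a b = X3 g X a b c d.
Proof. by rewrite !X3E KN_pairC // => x y; rewrite gC. Qed.

Lemma double_form_X1 : double_form (X1 g X).
Proof.
rewrite /X1 /Xc; apply: double_formB _ double_form_X3.
apply: double_formB _ (double_form_KN _).
exact: double_formB double_form_Xsym (double_form_X4 X).
Qed.

Lemma X1_pairC a b c d : X1 g X c d a b = X1 g X a b c d.
Proof.
by rewrite /X1 /Xc /X2 Xsym_pairC X4_pairC (KN_pairC hXc_sym) X3_pairC.
Qed.

Lemma tr1_X1 a c : tr1 g (X1 g X) a c = 0.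
Proof. by rewrite /X1 !tr1D !tr1N tr1_Xsym tr1_X4 tr1_X2 tr1_X3 hXcE; ring. Qed.

Lemma tr1_Xanti_antisym a c : tr1 g (Xanti X) a c = - tr1 g (Xanti X) c a.
Proof. by rewrite !tr1_Xanti; ring. Qed.

Lemma tr1_X6 a c : tr1 g (X6 g X) a c = tr1 g (Xanti X) a c.
Proof.
by rewrite /X6 tr1_KN (tr2_antisym tr1_Xanti_antisym) mul0r mul0r addr0.
Qed.

Lemma double_form_X5 : double_form (X5 g X).
Proof. exact: double_formB double_form_Xanti (double_form_KN _). Qed.

Lemma X5_pairN a b c d : X5 g X c d a b = - X5 g X a b c d.
Proof. by rewrite /X5 /X6 Xanti_pairN (KN_pairN tr1_Xanti_antisym); ring. Qed.

Lemma tr1_X5 a c : tr1 g (X5 g X) a c = 0.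
Proof. by rewrite /X5 tr1D tr1N tr1_X6 subrr. Qed.

Lemma dstar_X1 a b c d : dstar g (X1 g X) a b c d = - X1 g X a b c d.
Proof. exact: dstar_pairC_traceless double_form_X1 X1_pairC tr1_X1 a b c d. Qed.

Lemma dstar_X2 a b c d : dstar g (X2 g X) a b c d = X2 g X a b c d.
Proof. by rewrite /X2 (dstar_KN_sym hXc_sym) tr2_hXc mul0r mul0r subr0. Qed.

Lemma dstar_X3 a b c d : dstar g (X3 g X) a b c d = - X3 g X a b c d.
Proof.
rewrite (eq_dstar X3E) dstar_KN_sym => [|x y]; last by rewrite gC.
by rewrite tr2Z tr2_metric X3E /KN; field.
Qed.

Lemma dstar_X4 a b c d : dstar g (X4 X) a b c d = - X4 X a b c d.
Proof.
exact: dstar_pairC_traceless (double_form_X4 X) (X4_pairC X) tr1_X4 a b c d.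
Qed.

Lemma dstar_X5 a b c d : dstar g (X5 g X) a b c d = X5 g X a b c d.
Proof. exact: dstar_pairN_traceless double_form_X5 X5_pairN tr1_X5 a b c d. Qed.

Lemma dstar_X6 a b c d : dstar g (X6 g X) a b c d = - X6 g X a b c d.
Proof. exact: dstar_KN_antisym tr1_Xanti_antisym a b c d. Qed.

End Pieces.

End Metric.

Lemma lorentzian_metric (R : rcfType) (g : 'M[R]_4) :
  lorentzian g -> [/\ g^T = g, g \in unitmx & \det g <= 0].
Proof.
move=> [g_sym [P [P_unit gE]]].
have det_g : \det g = - \det P ^+ 2.
  rewrite gE !det_mulmx det_tr /minkowski_eta det_diag.
  by rewrite !big_ord_recr big_ord0 /= !mxE /=; ring.
split => //; last by rewrite det_g oppr_le0 sqr_ge0.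
by rewrite unitmxE unitfE det_g oppr_eq0 expf_eq0 /= -unitfE -unitmxE.
Qed.

Theorem mainTheorem4 (R : rcfType) (g : 'M[R]_4) (X : tensor4 R) :
  lorentzian g -> double_form X ->
  forall a b c d : 'I_4,
    dstar g (X1 g X) a b c d = - X1 g X a b c d /\
    dstar g (X2 g X) a b c d = X2 g X a b c d /\
    dstar g (X3 g X) a b c d = - X3 g X a b c d /\
    dstar g (X4 X) a b c d = - X4 X a b c d /\
    dstar g (X5 g X) a b c d = X5 g X a b c d /\
    dstar g (X6 g X) a b c d = - X6 g X a b c d.
Proof.
move=> /lorentzian_metric[g_sym g_unit det_g_le0] X_df a b c d.
by rewrite !(dstar_X1, dstar_X2, dstar_X3, dstar_X4, dstar_X5, dstar_X6).
Qed.
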